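(* Let $n\ge2$, let $\sigma,\delta,\tau\in\mathbb{C}$ with $|\sigma|=|\tau|>0$, fix a square root $\sqrt{\sigma\tau}$, and let $(\alpha,\beta)$ be one of the eight pairs $(0,\sqrt{\sigma\tau})$, $(\sqrt{\sigma\tau},0)$, $(0,-\sqrt{\sigma\tau})$, $(-\sqrt{\sigma\tau},0)$, $(\sqrt{\sigma\tau},-\sqrt{\sigma\tau})$, $(-\sqrt{\sigma\tau},\sqrt{\sigma\tau})$, $(\sqrt{\sigma\tau},\sqrt{\sigma\tau})$, $(-\sqrt{\sigma\tau},-\sqrt{\sigma\tau})$. Then $T_{\alpha,\beta}$ is normal, and consequently every eigenvalue $\lambda$ of $T_{\alpha,\beta}$ has condition number $\kappa(\lambda)=1$.
   Context: $T_{\alpha,\beta}$ denotes the $n\times n$ tridiagonal matrix with subdiagonal entries $\sigma$, superdiagonal entries $\tau$, and diagonal entries $\delta$ except the $(1,1)$ entry $\delta-\alpha$ and the $(n,n)$ entry $\delta-\beta$. For a simple eigenvalue $\lambda$ with right eigenvector $x$ ($Ax=\lambda x$) and left eigenvector $y$ ($y^HA=\lambda y^H$), the condition number is $\kappa(\lambda)=\|x\|_2\|y\|_2/|y^Hx|$. *)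

(* The complex field is modelled by an arbitrary
   numClosedFieldType C (algebraically closed field with conjugation and
   norm, e.g. complex numbers over a real closed field, or algC). *)
From HB Require Import structures.
From mathcomp Require Import all_boot all_order all_algebra.
Set Implicit Arguments. Unset Strict Implicit. Unset Printing Implicit Defensive.
Import Order.TTheory GRing.Theory Num.Theory.
Local Open Scope ring_scope.

Definition Tab (C : numClosedFieldType) (n : nat) (sigma delta tau alpha beta : C)
  : 'M[C]_n :=
  \matrix_(i < n, j < n)
    if i == j then
      delta - (if nat_of_ord i == 0%N then alpha else 0)
            - (if nat_of_ord i == n.-1 then beta else 0)
    else if nat_of_ord j == (nat_of_ord i).+1 then tau
    else if nat_of_ord i == (nat_of_ord j).+1 then sigma
    else 0.

Definition ctrans (C : numClosedFieldType) (m n : nat) (A : 'M[C]_(m, n))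
  : 'M[C]_(n, m) := map_mx (fun z => z^*) A^T.

Definition normal_mx (C : numClosedFieldType) (n : nat) (A : 'M[C]_n) : Prop :=
  A *m ctrans A = ctrans A *m A.

Definition norm2 (C : numClosedFieldType) (n : nat) (x : 'cV[C]_n) : C :=
  sqrtC (\sum_(i < n) `|x i 0| ^+ 2).

(* kappa = ||x||_2 ||y||_2 / |y^H x| (right eigenvector x, left eigenvector y) *)
Definition cond_eig (C : numClosedFieldType) (n : nat) (x y : 'cV[C]_n) : C :=
  norm2 x * norm2 y / `| (ctrans y *m x) 0 0 |.

From HB Require Import structures.
From mathcomp Require Import all_boot all_order all_algebra.
From mathcomp Require Import zify ring.
Set Implicit Arguments. Unset Strict Implicit. Unset Printing Implicit Defensive.
Import Order.TTheory GRing.Theory Num.Theory.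
Local Open Scope ring_scope.

(* Write T = delta I + P - D with P = sigma L + tau L^H (L the lower shift) and
   D = alpha E_11 + beta E_nn.  P is normal because |sigma| = |tau|, and D is
   normal being diagonal.  For a in {0, +-sqrt(sigma tau)} one has
   conj(a) sigma = a conj(tau), i.e. conj(a) P = a P^H; this makes
   P D^H = P^H D, which is exactly what the normality of P - D requires.
   For a normal matrix, left eigenvectors are right eigenvectors.  Since
   tau <> 0, an eigenvector of the tridiagonal T is determined by its first
   entry, so y is a multiple c x of x and kappa = |c| |x|^2 / |c| |x|^2 = 1. *)

Section ConjugateTranspose.
Variable C : numClosedFieldType.

Lemma ctransD m n (A B : 'M[C]_(m, n)) : ctrans (A + B) = ctrans A + ctrans B.
Proof. by apply/matrixP => i j; rewrite !mxE rmorphD. Qed.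

Lemma ctransB m n (A B : 'M[C]_(m, n)) : ctrans (A - B) = ctrans A - ctrans B.
Proof. by apply/matrixP => i j; rewrite !mxE rmorphB. Qed.

Lemma ctransZ m n (c : C) (A : 'M[C]_(m, n)) : ctrans (c *: A) = c^* *: ctrans A.
Proof. by apply/matrixP => i j; rewrite !mxE rmorphM. Qed.

Lemma ctransK m n (A : 'M[C]_(m, n)) : ctrans (ctrans A) = A.
Proof. by apply/matrixP => i j; rewrite !mxE conjCK. Qed.

Lemma ctransM m n p (A : 'M[C]_(m, n)) (B : 'M[C]_(n, p)) :
  ctrans (A *m B) = ctrans B *m ctrans A.
Proof. by rewrite /ctrans trmx_mul map_mxM. Qed.

Lemma ctrans_scalar_mx n (c : C) : ctrans (c%:M : 'M[C]_n) = c^*%:M.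
Proof. by rewrite /ctrans tr_scalar_mx map_scalar_mx. Qed.

Lemma ctrans_delta_mx_diag n (i : 'I_n) : ctrans (delta_mx i i : 'M[C]_n) = delta_mx i i.
Proof. by apply/matrixP => a b; rewrite !mxE rmorph_nat andbC. Qed.

Lemma ctrans_mulmx_diag m n (A : 'M[C]_(m, n)) i :
  (ctrans A *m A) i i = \sum_k `|A k i| ^+ 2.
Proof. by rewrite mxE; apply: eq_bigr => k _; rewrite !mxE normCKC. Qed.

Lemma ctrans_mulmx_eq0 m n (A : 'M[C]_(m, n)) : ctrans A *m A = 0 -> A = 0.
Proof.
move=> AhA0; apply/matrixP => k i; rewrite mxE.
have /psumr_eq0P sum0 : \sum_k `|A k i| ^+ 2 = 0.
  by rewrite -ctrans_mulmx_diag AhA0 mxE.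
by apply/eqP; rewrite -normr_eq0 -sqrf_eq0 sum0 // => j _; rewrite exprn_ge0.
Qed.

End ConjugateTranspose.

Section NormalMatrices.
Variables (C : numClosedFieldType) (n : nat).
Implicit Types (A B E F L P : 'M[C]_n) (a b d lambda : C).

Lemma normal_mx_scalarD d A : normal_mx A -> normal_mx (d%:M + A).
Proof.
rewrite /normal_mx ctransD ctrans_scalar_mx => nA.
rewrite !mulmxDl !mulmxDr nA !mul_scalar_mx !mul_mx_scalar !scale_scalar_mx mulrC.
by rewrite addrACA.
Qed.

Lemma normal_mxB A B :
  normal_mx A -> normal_mx B -> A *m ctrans B = ctrans A *m B -> normal_mx (A - B).
Proof.
rewrite /normal_mx => nA nB cross.
have cross' : B *m ctrans A = ctrans B *m A.
  by rewrite -[B *m _]ctransK ctransM ctransK cross ctransM ctransK.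
by rewrite ctransB !mulmxBl !mulmxBr nA nB cross cross'.
Qed.

Lemma normal_mx_scale_add_ctrans a b L :
  `|a| = `|b| -> normal_mx (a *: L + b *: ctrans L).
Proof.
move=> ab; rewrite /normal_mx ctransD !ctransZ ctransK.
rewrite !mulmxDl !mulmxDr -!scalemxAl -!scalemxAr !scalerA.
rewrite [a^* * a]mulrC [b^* * b]mulrC [b^* * a]mulrC [a^* * b]mulrC.
have -> : b * b^* = a * a^* by rewrite -!normCK ab.
by rewrite addrC; congr (_ + _); apply: addrC.
Qed.

Lemma normal_mx_scale_hermitian a b E F :
  ctrans E = E -> ctrans F = F -> E *m F = F *m E -> normal_mx (a *: E + b *: F).
Proof.
move=> hE hF EF; rewrite /normal_mx ctransD !ctransZ hE hF.
rewrite !mulmxDl !mulmxDr -!scalemxAl -!scalemxAr !scalerA EF.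
rewrite [a^* * a]mulrC [b^* * b]mulrC [b^* * a]mulrC [a^* * b]mulrC.
by rewrite addrACA.
Qed.

Lemma mulmx_ctrans_scale_hermitian a P E :
  ctrans E = E -> a^* *: P = a *: ctrans P ->
  P *m ctrans (a *: E) = ctrans P *m (a *: E).
Proof. by move=> hE hP; rewrite ctransZ hE -!scalemxAr !scalemxAl hP. Qed.

Lemma normal_mx_left_eigenvector A lambda (y : 'cV[C]_n) :
  normal_mx A -> ctrans y *m A = lambda *: ctrans y -> A *m y = lambda *: y.
Proof.
move=> nA yA; set N := (- lambda)%:M + A.
have nN : normal_mx N by apply: normal_mx_scalarD.
have yN : ctrans y *m N = 0.
  by rewrite mulmxDr yA mul_mx_scalar scaleNr addNr.
have Nhy : ctrans N *m y = 0.
  by rewrite -[y]ctransK -ctransM yN; apply/matrixP => i j; rewrite !mxE rmorph0.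
have /ctrans_mulmx_eq0 : ctrans (N *m y) *m (N *m y) = 0.
  by rewrite ctransM -mulmxA (mulmxA _ N) -nN -!mulmxA Nhy !mulmx0.
by rewrite mulmxDl mul_scalar_mx scaleNr => /eqP; rewrite addrC subr_eq0 => /eqP.
Qed.

End NormalMatrices.

Definition lower_shift {R : pzSemiRingType} n : 'M[R]_n := \matrix_(i, j) ((i : nat) == j.+1)%:R.

Section TridiagonalToeplitz.
Variable C : numClosedFieldType.
Implicit Types (sigma delta tau alpha beta a s : C).

Lemma conjC_mul_sqrt sigma tau s :
  `|sigma| = `|tau| -> s ^+ 2 = sigma * tau -> s^* * sigma = s * tau^*.
Proof.
move=> st s2; have [-> | s0] := eqVneq s 0; first by rewrite rmorph0 !mul0r.
have ss : s * s^* = tau * tau^* by rewrite -!normCK -normrX s2 normrM st expr2.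
by apply: (mulfI s0); rewrite mulrA ss mulrA -expr2 s2 mulrC mulrA.
Qed.

Lemma scale_conjC_add_ctrans n sigma tau a (L : 'M[C]_n) :
  a^* * sigma = a * tau^* ->
  a^* *: (sigma *: L + tau *: ctrans L) = a *: ctrans (sigma *: L + tau *: ctrans L).
Proof.
move=> bal; have bal' : a^* * tau = a * sigma^*.
  by apply: (can_inj conjCK); rewrite !rmorphM /= !conjCK bal.
by rewrite ctransD !ctransZ ctransK !scalerDr !scalerA bal bal' addrC.
Qed.

Lemma Tab_decomposition m sigma delta tau alpha beta :
  Tab m.+1 sigma delta tau alpha beta =
  delta%:M + ((sigma *: lower_shift m.+1 + tau *: ctrans (lower_shift m.+1))
              - (alpha *: delta_mx ord0 ord0 + beta *: delta_mx ord_max ord_max)).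
Proof.
apply/matrixP => -[i ltim] [j ltjm]; rewrite !mxE rmorph_nat -!val_eqE /=.
repeat match goal with |- context [(?a == ?b)%N] => case: (a =P b) => ? /= end;
  try (exfalso; lia); rewrite ?mulr1 ?mulr0 ?mulr1n ?mulr0n; ring.
Qed.

Lemma delta_mx_diag_commute n (i j : 'I_n) :
  delta_mx i i *m delta_mx j j = delta_mx j j *m (delta_mx i i : 'M[C]_n).
Proof. by rewrite !mul_delta_mx_cond; case: eqVneq => [-> | ij]. Qed.

Lemma Tab_normal n sigma delta tau alpha beta :
  `|sigma| = `|tau| -> alpha^* * sigma = alpha * tau^* -> beta^* * sigma = beta * tau^* ->
  normal_mx (Tab n sigma delta tau alpha beta).
Proof.
case: n => [|m] st bal_alpha bal_beta; first by apply/matrixP => -[].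
rewrite Tab_decomposition; apply/normal_mx_scalarD/normal_mxB.
- exact: normal_mx_scale_add_ctrans.
- apply: normal_mx_scale_hermitian; rewrite ?ctrans_delta_mx_diag //.
  exact: delta_mx_diag_commute.
- rewrite ctransD !mulmxDr !mulmx_ctrans_scale_hermitian ?ctrans_delta_mx_diag //.
  all: exact: scale_conjC_add_ctrans.
Qed.

Lemma Tab_above_superdiag n sigma delta tau alpha beta (i j : 'I_n) :
  (i.+1 < j)%N -> Tab n sigma delta tau alpha beta i j = 0.
Proof. by move=> ltij; rewrite mxE -val_eqE /=; do 3 (case: eqP => [?|_]; first lia). Qed.

Lemma Tab_superdiag n sigma delta tau alpha beta (i j : 'I_n) :
  j = i.+1 :> nat -> Tab n sigma delta tau alpha beta i j = tau.
Proof. by move=> ji; rewrite mxE -val_eqE /= ji eqxx; case: eqP => [?|_]; first lia. Qed.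

End TridiagonalToeplitz.

Section UnreducedHessenberg.
Variables (R : fieldType) (n : nat) (A : 'M[R]_n.+1).
Hypothesis A_above_superdiag : forall i j : 'I_n.+1, (i.+1 < j)%N -> A i j = 0.
Hypothesis A_superdiag_neq0 : forall i j : 'I_n.+1, j = i.+1 :> nat -> A i j != 0.

Lemma hessenberg_eigenvector_eq0 lambda (v : 'cV[R]_n.+1) :
  A *m v = lambda *: v -> v ord0 0 = 0 -> v = 0.
Proof.
move=> Av v0; suff vanish k : forall j : 'I_n.+1, (j <= k)%N -> v j 0 = 0.
  by apply/matrixP => j l; rewrite (ord1 l) mxE (vanish j).
elim: k => [|k IHk] j lejk.
  by have -> : j = ord0 by apply: val_inj => /=; lia.
have [lejk' | ltkj] := leqP j k; first exact: IHk.
have eqj : (j : nat) = k.+1 by lia.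
have ltk : (k < n.+1)%N by have := ltn_ord j; lia.
have := congr1 (fun w : 'cV[R]_n.+1 => w (Ordinal ltk) 0) Av.
rewrite !mxE (IHk (Ordinal ltk)) // mulr0 (bigD1 j) //= big1 ?addr0.
  by move/eqP; rewrite mulf_eq0 (negPf (@A_superdiag_neq0 (Ordinal ltk) j eqj)) => /eqP.
move=> l nelj; have [lelk | ltkl] := leqP l k; first by rewrite (IHk l) // mulr0.
rewrite A_above_superdiag ?mul0r //=.
by move: nelj; rewrite -val_eqE /= => /eqP; lia.
Qed.

Lemma hessenberg_eigenvector_head_neq0 lambda (v : 'cV[R]_n.+1) :
  A *m v = lambda *: v -> v != 0 -> v ord0 0 != 0.
Proof. by move=> Av; apply: contra => /eqP v0; apply/eqP/(hessenberg_eigenvector_eq0 Av). Qed.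

Lemma hessenberg_eigenvectors_colinear lambda (x z : 'cV[R]_n.+1) :
  A *m x = lambda *: x -> A *m z = lambda *: z -> x ord0 0 != 0 ->
  z = (z ord0 0 / x ord0 0) *: x.
Proof.
move=> Ax Az x0; set w := x ord0 0 *: z - z ord0 0 *: x.
have Aw : A *m w = lambda *: w.
  rewrite mulmxBr -!scalemxAr Ax Az scalerBr !scalerA.
  by rewrite (mulrC lambda) (mulrC lambda).
have /matrixP w0 : w = 0 by apply: (hessenberg_eigenvector_eq0 Aw); rewrite !mxE mulrC subrr.
apply/matrixP => i l; move: (w0 i l); rewrite !mxE => /eqP; rewrite subr_eq0 => /eqP e.
by rewrite mulrAC -e mulrAC divff // mul1r.
Qed.

End UnreducedHessenberg.

Section ConditionNumber.
Variables (C : numClosedFieldType) (n : nat).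
Implicit Types (x : 'cV[C]_n) (c : C).

Lemma norm2_ge0 x : 0 <= norm2 x.
Proof. by rewrite sqrtC_ge0 sumr_ge0 // => i _; rewrite exprn_ge0. Qed.

Lemma norm2_eq0 x : (norm2 x == 0) = (x == 0).
Proof.
rewrite /norm2 sqrtC_eq0 -ctrans_mulmx_diag; apply/eqP/eqP => [xx0 | ->].
  by apply: ctrans_mulmx_eq0; apply/matrixP => i j; rewrite !ord1 xx0 mxE.
by rewrite mulmx0 mxE.
Qed.

Lemma norm2_scale c x : norm2 (c *: x) = `|c| * norm2 x.
Proof.
rewrite /norm2 (eq_bigr (fun i => `|c| ^+ 2 * `|x i 0| ^+ 2)); last first.
  by move=> i _; rewrite mxE normrM exprMn.
rewrite -mulr_sumr sqrtCM ?sqrCK ?nnegrE ?exprn_ge0 //.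
by rewrite sumr_ge0 // => i _; rewrite exprn_ge0.
Qed.

Lemma cond_eig_scale c x : x != 0 -> c != 0 -> cond_eig x (c *: x) = 1.
Proof.
move=> x_neq0 c_neq0.
have xx : (ctrans x *m x) 0 0 = norm2 x ^+ 2 by rewrite sqrtCK ctrans_mulmx_diag.
rewrite /cond_eig norm2_scale ctransZ -scalemxAl mxE xx normrM norm_conjC.
rewrite normrX ger0_norm ?norm2_ge0 // mulrCA -expr2 divff //.
by rewrite mulf_neq0 ?normr_eq0 ?expf_neq0 ?norm2_eq0.
Qed.

End ConditionNumber.

Theorem proposition3 (C : numClosedFieldType) (n : nat) (sigma delta tau s alpha beta : C) :
  (2 <= n)%N ->
  `|sigma| = `|tau| -> 0 < `|sigma| ->
  s ^+ 2 = sigma * tau ->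
  (alpha, beta) \in [:: (0, s); (s, 0); (0, - s); (- s, 0);
                        (s, - s); (- s, s); (s, s); (- s, - s)] ->
  normal_mx (Tab n sigma delta tau alpha beta) /\
  (forall (lambda : C) (x y : 'cV[C]_n),
      x != 0 -> y != 0 ->
      Tab n sigma delta tau alpha beta *m x = lambda *: x ->
      ctrans y *m Tab n sigma delta tau alpha beta = lambda *: ctrans y ->
      cond_eig x y = 1).
Proof.
case: n => [|m] // _ st sigma_gt0 s2 alpha_beta.
have balanced a : a \in [:: 0; s; - s] -> a^* * sigma = a * tau^*.
  rewrite !inE => /or3P[] /eqP->; rewrite ?rmorph0 ?mul0r //.
    exact: conjC_mul_sqrt st s2.
  by rewrite rmorphN mulNr (conjC_mul_sqrt st s2) mulNr.
have [alpha_in beta_in] : alpha \in [:: 0; s; - s] /\ beta \in [:: 0; s; - s].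
  move: alpha_beta; rewrite !inE !xpair_eqE.
  by do ![case/orP]; case/andP => /eqP-> /eqP->; rewrite !eqxx ?orbT.
set T := Tab m.+1 sigma delta tau alpha beta.
have normalT : normal_mx T by apply: Tab_normal; rewrite ?balanced.
split=> // lambda x y x_neq0 y_neq0 Tx yT.
have Ty := normal_mx_left_eigenvector normalT yT.
have tau_neq0 : tau != 0 by rewrite -normr_eq0 -st gt_eqF.
have T_above := @Tab_above_superdiag _ m.+1 sigma delta tau alpha beta.
have T_super (i j : 'I_m.+1) (ji : j = i.+1 :> nat) : T i j != 0 by rewrite Tab_superdiag.
have x0 := hessenberg_eigenvector_head_neq0 T_above T_super Tx x_neq0.
have y_colinear := hessenberg_eigenvectors_colinear T_above T_super Tx Ty x0.
rewrite y_colinear cond_eig_scale //.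
by apply: contraNneq y_neq0 => c0; rewrite y_colinear c0 scale0r.
Qed.
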